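(* Let $G$ be a finite connected simple graph not isomorphic to $C_3$, $C_4$ or $C_5$. Then at least one of $G$, $\mathrm{L}(G)$, $\mathrm{L}^{(2)}(G)$ is not strongly regular; more precisely, there is $m\in\{0,1,2\}$ such that $\mathrm{L}^{(m)}(G)$ is not strongly regular.
   Context: A finite simple graph on $v\ge1$ vertices is strongly regular with parameters $(v,k,\lambda,\mu)$, where $k,\lambda,\mu$ are nonnegative integers, if every vertex has degree $k$, every pair of adjacent vertices has exactly $\lambda$ common neighbours, and every pair of distinct non-adjacent vertices has exactly $\mu$ common neighbours; by convention the graph with no vertices is not strongly regular. $\mathrm{L}(G)$ has vertex set $E(G)$, two vertices adjacent iff the corresponding edges share an endpoint; $\mathrm{L}^{(0)}(G)=G$, $\mathrm{L}^{(m)}(G)=\mathrm{L}(\mathrm{L}^{(m-1)}(G))$. $C_n$ is the cycle on $n$ vertices. *)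

From mathcomp Require Import all_boot.
Set Implicit Arguments. Unset Strict Implicit. Unset Printing Implicit Defensive.

Record sgraph := SGraph {
  vert : finType;
  adj : rel vert;
  adj_sym : symmetric adj;
  adj_irr : irreflexive adj }.

Definition connected (G : sgraph) : Prop :=
  forall x y : vert G, connect (@adj G) x y.

Definition common_nbrs (G : sgraph) (x y : vert G) : {set vert G} :=
  [set z | adj x z && adj y z].

Definition srg_with (G : sgraph) (v k l m : nat) : Prop :=
  [/\ #|vert G| = v, 1 <= v,
      forall x : vert G, #|[set y | adj x y]| = k,
      forall x y : vert G, adj x y -> #|common_nbrs x y| = l &
      forall x y : vert G, x != y -> ~~ adj x y -> #|common_nbrs x y| = m].

Definition strongly_regular (G : sgraph) : Prop :=
  exists v k l m, srg_with G v k l m.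

Definition is_edge (G : sgraph) (s : {set vert G}) : bool :=
  [exists x : vert G, exists y : vert G, adj x y && (s == [set x; y])].

Definition edge_type (G : sgraph) := {s : {set vert G} | is_edge s}.

Definition line_adj (G : sgraph) : rel (edge_type G) :=
  fun e f => (e != f) && (val e :&: val f != set0).

Lemma line_adj_sym G : symmetric (@line_adj G).
Proof. by move=> e f; rewrite /line_adj eq_sym setIC. Qed.

Lemma line_adj_irr G : irreflexive (@line_adj G).
Proof. by move=> e; rewrite /line_adj eqxx. Qed.

Definition line_graph (G : sgraph) : sgraph :=
  SGraph (@line_adj_sym G) (@line_adj_irr G).

Fixpoint iter_line (m : nat) (G : sgraph) : sgraph :=
  match m with 0 => G | m'.+1 => line_graph (iter_line m' G) end.

(* The cycle C_n on 'I_n (meaningful for n >= 3). *)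
Definition cyc_adj (n : nat) : rel 'I_n :=
  fun i j => (i != j) && ((j == (i.+1 %% n) :> nat) || (i == (j.+1 %% n) :> nat)).

Lemma cyc_adj_sym n : symmetric (@cyc_adj n).
Proof. by move=> i j; rewrite /cyc_adj eq_sym orbC. Qed.

Lemma cyc_adj_irr n : irreflexive (@cyc_adj n).
Proof. by move=> i; rewrite /cyc_adj eqxx. Qed.

Definition cycle_graph (n : nat) : sgraph :=
  SGraph (@cyc_adj_sym n) (@cyc_adj_irr n).

Definition isomorphic (G H : sgraph) : Prop :=
  exists f : vert G -> vert H, bijective f /\
    forall x y : vert G, adj (f x) (f y) = adj x y.

From mathcomp Require Import all_boot zify.
From Stdlib Require Import Classical.
Set Implicit Arguments. Unset Strict Implicit. Unset Printing Implicit Defensive.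

(* Let G be strongly regular of degree k.  If k = 0 then L(G) has no vertices, and if
   k = 1 then L(L(G)) has none; the empty graph is not strongly regular.  If k = 2 and
   G is not a triangle then mu > 0, so the cycle G has diameter at most 2 and is C4
   or C5.  If k >= 3, count common neighbours in a line graph L(H): two edges xy, xz
   of H meeting at x have deg x - 2 + [y ~ z] of them, so a constant lambda for L(H)
   means that the neighbours of any vertex of H are pairwise all adjacent or all
   non-adjacent.  In H = L(G) this fails at every edge x0x with deg x0 >= 3 and
   deg x >= 2: two further edges at x0 are adjacent, while an edge xy and an edge
   x0w with w <> y are not. *)

Section Neighbourhoods.
Variable G : sgraph.
Implicit Types x y z w : vert G.

Lemma adj_neq x y : adj x y -> x != y.
Proof. by apply: contraTneq => ->; rewrite adj_irr. Qed.

Lemma exists_nbr_notin x (A : {set vert G}) :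
  #|A| < #|[set y | adj x y]| -> exists2 y, adj x y & y \notin A.
Proof.
move=> ltAN; have /card_gt0P[y] : 0 < #|[set y | adj x y] :\: A|.
  have := cardsID A [set y | adj x y].
  have : #|[set y | adj x y] :&: A| <= #|A| by rewrite subset_leq_card ?subsetIr.
  lia.
by rewrite !inE => /andP[yA xy]; exists y.
Qed.

Lemma adj_deg2 x y z : #|[set y | adj x y]| = 2 -> adj x y -> adj x z -> y != z ->
  forall w, adj x w = (w == y) || (w == z).
Proof.
move=> deg2 xy xz yz w.
have sub : [set y; z] \subset [set w | adj x w].
  by apply/subsetP => u /set2P[]->; rewrite inE.
have /subset_cardP/(_ sub)/(_ w) : #|[set y; z]| = #|[set w | adj x w]|.
  by rewrite cards2 yz deg2.
by rewrite !inE => <-.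
Qed.

End Neighbourhoods.

Lemma val_ordS n (i : 'I_n) : val (ordS i) = if i.+1 == n then 0 else i.+1.
Proof.
rewrite /=; case: eqP => [->|/eqP ne]; first exact: modnn.
by rewrite modn_small // ltn_neqAle ne ltn_ord.
Qed.

Lemma ordS_neq n (i : 'I_n) : 1 < n -> ordS i != i.
Proof. by rewrite -val_eqE val_ordS /=; have := ltn_ord i; case: ifP => /eqP; lia. Qed.

Lemma ordS2_neq n (i : 'I_n) : 2 < n -> ordS (ordS i) != i.
Proof.
rewrite -val_eqE !val_ordS /=; have := ltn_ord i.
by case: ifP => /eqP; case: ifP => /eqP; lia.
Qed.

Lemma isomorphic_cycle_graph (G : sgraph) n (f : 'I_n -> vert G) :
  bijective f -> (forall i j, adj (f i) (f j) = cyc_adj i j) ->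
  isomorphic G (cycle_graph n).
Proof.
case=> g fK gK f_adj; exists g; split; first by exists f.
by move=> x y; rewrite /= -f_adj !gK.
Qed.

Lemma two_regular_isomorphic_cycle (G : sgraph) (s : seq (vert G)) (x0 : vert G) :
  connected G -> (forall x : vert G, #|[set y | adj x y]| = 2) -> uniq s -> 2 < size s ->
  (forall i : 'I_(size s), adj (nth x0 s i) (nth x0 s (ordS i))) ->
  isomorphic G (cycle_graph (size s)).
Proof.
move=> conn deg2 s_uniq; set n := size s => n_gt2 s_adj.
pose f (i : 'I_n) := nth x0 s i.
have f_inj : injective f by move=> i j /eqP; rewrite nth_uniq // => /eqP/val_inj.
have f_nbrs i w : adj (f i) w = (w == f (ordS i)) || (w == f (ord_pred i)).
  apply: adj_deg2; rewrite ?s_adj //.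
    by rewrite adj_sym -{2}(ord_predK i) s_adj.
  rewrite (inj_eq f_inj); apply: contraNneq (ordS2_neq i n_gt2) => ->.
  by rewrite ord_predK.
have s_closed : closed (@adj G) [pred w | w \in s].
  have adj_s x y : adj x y -> x \in s -> y \in s.
    move=> xy xs; have x_idx : index x s < n by rewrite index_mem.
    move: xy; rewrite -(nth_index x0 xs) -[index x s]/(val (Ordinal x_idx)) -/(f _) f_nbrs.
    by case/orP => /eqP ->; apply: mem_nth.
  by move=> x y xy; apply/idP/idP; apply: adj_s; rewrite // adj_sym.
have s_all w : w \in s.
  pose i0 : 'I_n := Ordinal (ltnW (ltnW n_gt2)).
  by have := closed_connect s_closed (conn (f i0) w); rewrite !inE => <-; apply: mem_nth.
have f_bij : bijective f.
  apply: (inj_card_bij f_inj); rewrite card_ord (leq_trans _ (card_size s)) //.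
  by apply: subset_leq_card; apply/subsetP => w _; apply: s_all.
apply: (isomorphic_cycle_graph f_bij) => i j.
rewrite f_nbrs !(inj_eq f_inj) -(can2_eq (@ordSK n) (@ord_predK n)) /cyc_adj.
have [-> | ne1] := eqVneq j (ordS i).
  by rewrite /= eqxx eq_sym ordS_neq // ltnW.
have [<- | ne2] := eqVneq (ordS j) i.
  by rewrite /= eqxx orbT ordS_neq // ltnW.
move: ne1 ne2; rewrite -!val_eqE /= => /negbTE -> /negbTE.
by rewrite eq_sym => ->; rewrite andbF.
Qed.

Section TwoRegular.
Variable G : sgraph.
Hypothesis conn : connected G.
Hypothesis deg2 : forall x : vert G, #|[set y | adj x y]| = 2.
Implicit Types v x y : vert G.

Lemma other_nbr x y : exists2 z, adj x z & y != z.
Proof.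
have [|z xz] := @exists_nbr_notin _ x [set y]; first by rewrite cards1 deg2.
by rewrite inE eq_sym; exists z.
Qed.

Lemma two_regular_triangle v a b : adj v a -> adj v b -> adj a b ->
  isomorphic G (cycle_graph 3).
Proof.
move=> va vb ab; apply: (@two_regular_isomorphic_cycle G [:: v; a; b] v) => //.
  by rewrite /= !inE !negb_or !adj_neq.
by case=> [[|[|[|i]]] Hi] //=; rewrite adj_sym.
Qed.

Lemma two_regular_small_cycle (v : vert G) :
  (forall x y : vert G, x != y -> ~~ adj x y -> exists2 z, adj x z & adj y z) ->
  [\/ isomorphic G (cycle_graph 3), isomorphic G (cycle_graph 4) |
      isomorphic G (cycle_graph 5)].
Proof.
move=> diam2; have [a va _] := other_nbr v v; have [b vb ab] := other_nbr v a.
case ab_adj: (adj a b); first by apply: Or31; apply: two_regular_triangle va vb ab_adj.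
have av : adj a v by rewrite adj_sym.
have bv : adj b v by rewrite adj_sym.
have [c ac vc] := other_nbr a v; have [d bd vd] := other_nbr b v.
have adj_v := adj_deg2 (deg2 v) va vb ab.
have adj_a := adj_deg2 (deg2 a) av ac vc.
have adj_b := adj_deg2 (deg2 b) bv bd vd.
have va_neq := adj_neq va; have vb_neq := adj_neq vb.
have ac_neq := adj_neq ac; have bd_neq := adj_neq bd.
have cb : c != b by apply: contraFneq ab_adj => <-.
have da : d != a by apply: contraFneq ab_adj => <-; rewrite adj_sym.
have [eq_cd | cd] := eqVneq c d.
  subst d; apply: Or32; apply: (@two_regular_isomorphic_cycle G [:: v; a; c; b] v) => //.
    by rewrite /= !inE !negb_or va_neq vc vb_neq ac_neq ab cb.
  by case=> [[|[|[|[|i]]]] Hi] //=; rewrite adj_sym.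
case cd_adj: (adj c d).
  apply: Or33; apply: (@two_regular_isomorphic_cycle G [:: v; a; c; d; b] v) => //.
    rewrite /= !inE !negb_or va_neq vc vd vb_neq ac_neq ab cd cb.
    by rewrite (eq_sym a) da (eq_sym d) bd_neq.
  by case=> [[|[|[|[|[|i]]]]] Hi] //=; rewrite adj_sym.
(* A common neighbour w of c and d is at distance 3 from v. *)
have [w cw dw] := diam2 c d cd (negbT cd_adj).
have wc : w != c by rewrite eq_sym adj_neq.
have wd : w != d by rewrite eq_sym adj_neq.
have vw : v != w by apply: contraTneq cw => <-; rewrite adj_sym adj_v negb_or eq_sym ac_neq.
have wa : w != a.
  by apply: contraTneq dw => ->; rewrite adj_sym adj_a negb_or (eq_sym d v) (eq_sym d c) vd cd.
have wb : w != b.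
  by apply: contraTneq cw => ->; rewrite adj_sym adj_b negb_or (eq_sym c v) vc cd.
have vw_adj : ~~ adj v w by rewrite adj_v negb_or wa wb.
have [z] := diam2 v w vw vw_adj; rewrite adj_v => /orP[]/eqP->; rewrite adj_sym.
  by rewrite adj_a (eq_sym w v) (negbTE vw) (negbTE wc).
by rewrite adj_b (eq_sym w v) (negbTE vw) (negbTE wd).
Qed.

Lemma srg_deg2_small_cycle n l m : srg_with G n 2 l m ->
  [\/ isomorphic G (cycle_graph 3), isomorphic G (cycle_graph 4) |
      isomorphic G (cycle_graph 5)].
Proof.
case=> cardG G_gt0 _ _ mu; have /card_gt0P[v _] : 0 < #|vert G| by rewrite cardG.
have [a va _] := other_nbr v v; have [b vb ab] := other_nbr v a.
case ab_adj: (adj a b); first by apply: Or31; apply: two_regular_triangle va vb ab_adj.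
apply: (two_regular_small_cycle v) => x y xy xy_adj.
have : 0 < #|common_nbrs x y|.
  rewrite mu // -(mu a b ab (negbT ab_adj)).
  by apply/card_gt0P; exists v; rewrite inE !(adj_sym _ v) va.
by case/card_gt0P => z; rewrite inE => /andP[xz yz]; exists z.
Qed.

End TwoRegular.

Section LineGraph.
Variable H : sgraph.
Implicit Types (x y z w : vert H) (E F : edge_type H).

Lemma is_edge_set2 x y : adj x y -> is_edge [set x; y].
Proof. by move=> xy; apply/existsP; exists x; apply/existsP; exists y; rewrite xy eqxx. Qed.

Definition edge_of x y (xy : adj x y) : edge_type H := exist (@is_edge H) _ (is_edge_set2 xy).

Lemma edge_ofC x y (xy : adj x y) (yx : adj y x) : edge_of yx = edge_of xy.
Proof. by apply: val_inj; rewrite /= setUC. Qed.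

Lemma card_edge F : #|val F| = 2.
Proof.
case: F => s /= /existsP[x /existsP[y /andP[xy /eqP ->]]].
by rewrite cards2 adj_neq.
Qed.

Lemma edge_at F w : w \in val F -> exists2 u, adj w u & val F = [set w; u].
Proof.
case: F => /= _ /existsP[x /existsP[y /andP[xy /eqP ->]]] /set2P[]->; first by exists y.
by exists x; rewrite 1?adj_sym // setUC.
Qed.

Lemma edge_set2 F y z : y != z -> y \in val F -> z \in val F -> val F = [set y; z].
Proof.
move=> yz yF zF; apply/esym/eqP; rewrite eqEcard card_edge cards2 yz andbT.
by apply/subsetP => u /set2P[]->.
Qed.

Lemma edge_adj F y z : y != z -> y \in val F -> z \in val F -> adj y z.
Proof.
move=> yz /edge_at[u yu ->] /set2P[zy|-> //].
by rewrite zy eqxx in yz.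
Qed.

Lemma edge_neq x E F : x \in val E -> x \notin val F -> E != F.
Proof. by move=> xE; apply: contraNneq => <-. Qed.

Lemma line_adjE_at w E F : w \in val E -> w \in val F -> line_adj E F = (E != F).
Proof.
move=> wE wF; rewrite /line_adj andbC; have -> // : val E :&: val F != set0.
by apply/set0Pn; exists w; rewrite inE wE.
Qed.

Lemma line_adj_edge_of x y z (xy : adj x y) (xz : adj x z) :
  y != z -> line_adj (edge_of xy) (edge_of xz).
Proof.
move=> yz; rewrite (@line_adjE_at x) ?set21 //.
apply: (@edge_neq y); rewrite /= !inE ?eqxx ?orbT //= negb_or yz andbT eq_sym.
exact: adj_neq xy.
Qed.

Lemma line_adj_edge_of_disjoint x y u v (xy : adj x y) (uv : adj u v) :
  x \notin [set u; v] -> y \notin [set u; v] -> ~~ line_adj (edge_of xy) (edge_of uv).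
Proof.
move=> xN yN; rewrite /line_adj negb_and; apply/orP; right; rewrite negbK.
apply/eqP/setP => t; rewrite inE in_set0.
by apply/negP => /andP[/set2P[]-> tuv]; [rewrite tuv in xN | rewrite tuv in yN].
Qed.

Lemma line_adj_other_end x y (xy : adj x y) F :
  line_adj (edge_of xy) F -> x \notin val F -> y \in val F.
Proof.
case/andP=> _ /set0Pn[w]; rewrite inE => /andP[/set2P[]-> wF] //.
by rewrite wF.
Qed.

(* The common neighbours of the edges xy and xz of L(H) are the other edges at x,
   plus the edge yz when it exists. *)
Lemma card_line_common_nbrs x y z (xy : adj x y) (xz : adj x z) : y != z ->
  #|@common_nbrs (line_graph H) (edge_of xy) (edge_of xz)| + 2 =
  #|[set F : edge_type H | x \in val F]| + adj y z.
Proof.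
move=> yz; set C := common_nbrs _ _; set X := [set F : edge_type H | x \in val F].
have xy_xz : edge_of xy != edge_of xz by case/andP: (line_adj_edge_of xy xz yz).
have CX : C :&: X = X :\ edge_of xy :\ edge_of xz.
  apply/setP => F; rewrite !inE; case xF: (x \in val F); rewrite ?andbF //=.
  by rewrite !(@line_adjE_at x) ?set21 // !andbT andbC !(eq_sym F).
have cardX : #|X| = #|X :\ edge_of xy :\ edge_of xz|.+2.
  rewrite (cardsD1 (edge_of xy)) (cardsD1 (edge_of xz) (X :\ _)) !inE /=.
  by rewrite eqxx (eq_sym (edge_of xz)) xy_xz.
have cardCDX : #|C :\: X| = adj y z.
  case yz_adj: (adj y z).
  - have xNyz : x \notin [set y; z] by rewrite !inE negb_or !adj_neq.
    suff -> : C :\: X = [set edge_of yz_adj] by rewrite cards1.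
    apply/setP => F; rewrite !inE; apply/idP/eqP => [/and3P[xF xyF xzF]|->].
      by apply: val_inj; apply: edge_set2 yz (line_adj_other_end xyF xF) _;
         apply: line_adj_other_end xzF xF.
    rewrite /= xNyz /=; apply/andP; split.
      by rewrite (@line_adjE_at y) ?set21 ?set22 // (@edge_neq x) ?set21.
    by rewrite (@line_adjE_at z) ?set22 // (@edge_neq x) ?set21.
  - suff -> : C :\: X = set0 by rewrite cards0.
    apply/setP => F; rewrite !inE; apply/negP => /and3P[xF xyF xzF].
    have := edge_adj yz (line_adj_other_end xyF xF) (line_adj_other_end xzF xF).
    by rewrite yz_adj.
rewrite -(cardsID X C) CX cardCDX cardX; lia.
Qed.

Lemma srg_line_adj_nbrs x y z y' z' (xy : adj x y) (xz : adj x z)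
    (xy' : adj x y') (xz' : adj x z') :
  strongly_regular (line_graph H) -> y != z -> y' != z' -> adj y z = adj y' z'.
Proof.
case=> [v [k [l [m [_ _ _ lambda _]]]]] yz yz'.
have := card_line_common_nbrs xy xz yz; have := card_line_common_nbrs xy' xz' yz'.
rewrite (lambda _ _ (line_adj_edge_of xy xz yz)) (lambda _ _ (line_adj_edge_of xy' xz' yz')).
by case: (adj y z); case: (adj y' z') => //=; lia.
Qed.

End LineGraph.


Lemma line_not_srg_edgeless (H : sgraph) :
  (forall x y : vert H, ~~ adj x y) -> ~ strongly_regular (line_graph H).
Proof.
move=> noedge [v [k [l [m [cardv v_gt0 _ _ _]]]]].
have /card_gt0P[E _] : 0 < #|vert (line_graph H)| by rewrite cardv.
have /card_gt0P[x xE] : 0 < #|val E| by rewrite card_edge.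
by have [y xy _] := edge_at xE; rewrite (negbTE (noedge x y)) in xy.
Qed.

Lemma line_edgeless_deg1 (H : sgraph) :
  (forall x : vert H, #|[set y | adj x y]| <= 1) ->
  forall E F : edge_type H, ~~ line_adj E F.
Proof.
move=> deg1 E F; apply/negP => /andP[EF /set0Pn[w]]; rewrite inE => /andP[wE wF].
have [u wu Ewu] := edge_at wE; have [u' wu' Fwu'] := edge_at wF.
have uu' : u = u'.
  have sub : [set u; u'] \subset [set y | adj w y].
    by apply/subsetP => t /set2P[]->; rewrite inE.
  by have := leq_trans (subset_leq_card sub) (deg1 w); rewrite cards2; case: eqP.
suff EF_eq : E = F by rewrite EF_eq eqxx in EF.
by apply: val_inj; rewrite Ewu Fwu' uu'.
Qed.

Lemma not_srg_line2 (G : sgraph) (x0 x : vert G) :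
  adj x0 x -> 2 < #|[set y | adj x0 y]| -> 1 < #|[set y | adj x y]| ->
  ~ strongly_regular (line_graph (line_graph G)).
Proof.
move=> x0x deg_x0 deg_x srg.
have card_set2 (a b : vert G) : #|[set a; b]| <= 2 by rewrite cards2; case: (_ != _).
have [w1 x0w1] : exists2 w1, adj x0 w1 & w1 \notin [set x].
  by apply: exists_nbr_notin; rewrite cards1; lia.
rewrite inE => w1x.
have [w2 x0w2] : exists2 w2, adj x0 w2 & w2 \notin [set x; w1].
  by apply: exists_nbr_notin; apply: leq_ltn_trans (card_set2 _ _) deg_x0.
rewrite !inE negb_or => /andP[w2x w2w1].
have [y xy] : exists2 y, adj x y & y \notin [set x0].
  by apply: exists_nbr_notin; rewrite cards1.
rewrite inE => yx0.
have [w x0w] : exists2 w, adj x0 w & w \notin [set x; y].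
  by apply: exists_nbr_notin; apply: leq_ltn_trans (card_set2 _ _) deg_x0.
rewrite !inE negb_or => /andP[wx wy].
pose e := edge_of x0x.
have xx0 : adj x x0 by rewrite adj_sym.
have e_xy : line_adj e (edge_of xy).
  by rewrite /e -(edge_ofC x0x xx0) line_adj_edge_of 1?eq_sym.
have e_w1 : line_adj e (edge_of x0w1) by rewrite line_adj_edge_of 1?eq_sym.
have e_w2 : line_adj e (edge_of x0w2) by rewrite line_adj_edge_of 1?eq_sym.
have e_w : line_adj e (edge_of x0w) by rewrite line_adj_edge_of 1?eq_sym.
have w1_w2 : line_adj (edge_of x0w1) (edge_of x0w2) by rewrite line_adj_edge_of 1?eq_sym.
have xy_w : ~~ line_adj (edge_of xy) (edge_of x0w).
  apply: line_adj_edge_of_disjoint; rewrite !inE !negb_or.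
    by rewrite (eq_sym x x0) (adj_neq x0x) eq_sym wx.
  by rewrite yx0 eq_sym wy.
have xy_neq_w : edge_of xy != edge_of x0w.
  by apply: (@edge_neq _ x); rewrite !inE ?eqxx // negb_or (eq_sym x w) wx eq_sym adj_neq.
have := @srg_line_adj_nbrs (line_graph G) _ _ _ _ _ e_w1 e_w2 e_xy e_w srg.
rewrite (w1_w2 : @adj (line_graph G) _ _) (negbTE xy_w : @adj (line_graph G) _ _ = false).
by move=> /(_ (@adj_neq (line_graph G) _ _ w1_w2) xy_neq_w).
Qed.

Theorem mainTheorem8 (G : sgraph) :
  connected G ->
  ~ isomorphic G (cycle_graph 3) ->
  ~ isomorphic G (cycle_graph 4) ->
  ~ isomorphic G (cycle_graph 5) ->
  exists m, m <= 2 /\ ~ strongly_regular (iter_line m G).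
Proof.
move=> conn notC3 notC4 notC5.
have [[n [k [l [m srgG]]]] | not_srg] := classic (strongly_regular G); last by exists 0.
have [cardG G_gt0 degG _ _] := srgG.
case: k degG srgG => [|[|[|k]]] degG srgG.
- exists 1; split => //; apply: line_not_srg_edgeless => x y.
  by apply: contra_eqN (degG x) => xy; rewrite -lt0n; apply/card_gt0P; exists y; rewrite inE.
- by exists 2; split => //; apply/line_not_srg_edgeless/line_edgeless_deg1 => x; rewrite degG.
- by case: (srg_deg2_small_cycle conn degG srgG).
- exists 2; split => //.
  have /card_gt0P[x0 _] : 0 < #|vert G| by rewrite cardG.
  have /card_gt0P[x] : 0 < #|[set y | adj x0 y]| by rewrite degG.
  by rewrite inE => x0x; apply: (not_srg_line2 x0x); rewrite degG.
Qed.
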